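(* Let $P^*$ and $\widehat P$ be transition kernels and $\pi_b,\pi$ policies satisfying the standing assumptions, and let $\mathcal G$ be any class of functions $g:\mathbb S\times\mathbb A\to\mathbb R$ with $\sup_{g\in\mathcal G}\|g\|_\infty<\infty$. Define $$\mathcal F:=\Big\{Q_g^{\pi,\widehat P}\;:\;g\in\mathcal G\Big\},$$ i.e. $f\in\mathcal F$ iff $f(s,a)=\mathbb E_{\pi,\widehat P}\big[\sum_{t=0}^\infty (g(s_t,a_t)-\hat\eta^\pi_g)\mid s_0=s,a_0=a\big]$ with $\hat\eta^\pi_g=\lim_{T\to\infty}\mathbb E_{\pi,\widehat P}\big[\frac1{T+1}\sum_{t=0}^T g(s_t,a_t)\big]$ for some $g\in\mathcal G$. Then $$D_{\mathcal G}\big(d_{\pi_b}^{P^*},d_{\pi}^{\widehat P}\big)=\mathcal R_{\mathcal F}(d_{\pi_b}^{P^*},\pi,\widehat P):=\sup_{f\in\mathcal F}\Big|\mathbb E_{(s,a)\sim d_{\pi_b}^{P^*}}[f(s,a)]-\mathbb E_{(s,a)\sim d_{\pi_b}^{P^*},\,s'\sim\widehat P(\cdot\mid s,a),\,a'\sim\pi(\cdot\mid s')}[f(s',a')]\Big|.$$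
   Context: Standing setting: finite state space $\mathbb S$ and finite action space $\mathbb A$. A transition kernel $P$ gives probabilities $P(s'\mid s,a)$; a (time-stationary Markov) policy $\pi$ gives probabilities $\pi(a\mid s)$. Standing assumption: for every kernel $P\in\{P^*,\widehat P\}$ and policy $\pi$ considered, the Markov chain on $\mathbb S\times\mathbb A$ with transitions $(s,a)\mapsto(s',a')$, $s'\sim P(\cdot\mid s,a)$, $a'\sim\pi(\cdot\mid s')$, is irreducible and aperiodic. Its unique stationary distribution is denoted $d_\pi^P(s,a)$ (so $d_\pi^P(s,a)=d_\pi^P(s)\pi(a\mid s)$ and $d^P_\pi(s',a')=\sum_{s,a}\pi(a'\mid s')P(s'\mid s,a)d^P_\pi(s,a)$). $P^*$ is the true dynamics, $\widehat P$ an estimated dynamics, $\pi_b$ the behavior policy. For a bounded ''reward'' $g:\mathbb S\times\mathbb A\to\mathbb R$, the average reward is $\eta^{\pi,P}_g=\mathbb E_{d_\pi^P}[g]=\lim_{T\to\infty}\mathbb E_{\pi,P}[\frac1{T+1}\sum_{t=0}^T g(s_t,a_t)]$, and the differential value function is $Q_g^{\pi,P}(s,a)=\mathbb E_{\pi,P}\big[\sum_{t=0}^\infty (g(s_t,a_t)-\eta^{\pi,P}_g)\mid s_0=s,a_0=a\big]$ (the series converges under the standing assumption), where $\mathbb E_{\pi,P}$ is over trajectories with $s_{t+1}\sim P(\cdot\mid s_t,a_t)$, $a_{t+1}\sim\pi(\cdot\mid s_{t+1})$. For a function class $\mathcal G$ and distributions $\mu,\nu$ on $\mathbb S\times\mathbb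 A$, the integral probability metric is $D_{\mathcal G}(\mu,\nu):=\sup_{g\in\mathcal G}\big|\mathbb E_{\mu}[g]-\mathbb E_{\nu}[g]\big|$. *)

From HB Require Import structures.
From mathcomp Require Import all_boot all_order all_algebra.
From mathcomp Require Import all_classical all_reals all_analysis.
Set Implicit Arguments. Unset Strict Implicit. Unset Printing Implicit Defensive.
Import Order.TTheory GRing.Theory Num.Theory.
Local Open Scope ring_scope.
Local Open Scope classical_set_scope.

Section MDP.
Variables (R : realType) (S A : finType).

(* transition trans_kernel P s a s' = P(s' | s, a) *)
Definition trans_kernel (P : S -> A -> S -> R) : Prop :=
  (forall s a s', 0 <= P s a s') /\ (forall s a, \sum_(s' : S) P s a s' = 1).

(* mdp_policy pi s a = pi(a | s) *)
Definition mdp_policy (pi : S -> A -> R) : Prop :=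
  (forall s a, 0 <= pi s a) /\ (forall s, \sum_(a : A) pi s a = 1).

Definition sa_trans (P : S -> A -> S -> R) (pi : S -> A -> R)
  (x y : S * A) : R := P x.1 x.2 y.1 * pi y.1 y.2.

Fixpoint sa_nstep (P : S -> A -> S -> R) (pi : S -> A -> R) (n : nat)
  (x y : S * A) : R :=
  match n with
  | 0 => (x == y)%:R
  | n.+1 => \sum_(z : S * A) sa_nstep P pi n x z * sa_trans P pi z y
  end.

Definition sa_irreducible (P : S -> A -> S -> R) (pi : S -> A -> R) : Prop :=
  forall x y : S * A, exists n, 0 < sa_nstep P pi n x y.

(* every state has period 1: the gcd of its return times
   {n >= 1 | P^n(x,x) > 0} is 1, i.e. no d > 1 divides all of them *)
Definition sa_aperiodic (P : S -> A -> S -> R) (pi : S -> A -> R) : Prop :=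
  forall x : S * A, forall d : nat, (1 < d)%N ->
    ~ (forall n : nat, (0 < n)%N -> 0 < sa_nstep P pi n x x -> (d %| n)%N).

Definition sa_stationary (P : S -> A -> S -> R) (pi : S -> A -> R)
  (d : S * A -> R) : Prop :=
  (forall x, 0 <= d x) /\ \sum_(x : S * A) d x = 1 /\
  (forall y : S * A,
     d y = \sum_(x : S * A) pi y.1 y.2 * P x.1 x.2 y.1 * d x).

Definition expect (d : S * A -> R) (g : S * A -> R) : R :=
  \sum_(x : S * A) d x * g x.

(* average reward eta_g^{pi,P} = E_{d_pi^P}[g] (d the sa_stationary dist.) *)
Definition avg_reward (d : S * A -> R) (g : S * A -> R) : R := expect d g.

Definition cond_exp_t (P : S -> A -> S -> R) (pi : S -> A -> R) (t : nat)
  (g : S * A -> R) (x : S * A) : R :=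
  \sum_(y : S * A) sa_nstep P pi t x y * g y.

Definition Qfun (P : S -> A -> S -> R) (pi : S -> A -> R) (d : S * A -> R)
  (g : S * A -> R) (x : S * A) : R :=
  limn (series (fun t : nat => (cond_exp_t P pi t g x - avg_reward d g : R^o))).

Definition IPM (G : set (S * A -> R)) (mu nu : S * A -> R) : R :=
  sup [set r : R | exists2 g, G g & r = `|expect mu g - expect nu g|].

Definition RF (F : set (S * A -> R)) (mu : S * A -> R)
  (pi : S -> A -> R) (P : S -> A -> S -> R) : R :=
  sup [set r : R | exists2 f, F f &
     r = `|expect mu f -
           \sum_(x : S * A) mu x *
             \sum_(s' : S) P x.1 x.2 s' * \sum_(a' : A) pi s' a' * f (s', a')|].

End MDP.

From HB Require Import structures.
From mathcomp Require Import all_boot all_order all_algebra.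
From mathcomp Require Import all_classical all_reals all_analysis.
From mathcomp Require Import zify ring lra.
Import Order.TTheory GRing.Theory Num.Theory.
Local Open Scope ring_scope.
Local Open Scope classical_set_scope.
Set Implicit Arguments. Unset Strict Implicit. Unset Printing Implicit Defensive.

(* The differential value function Q = Q_g^{pi,Phat} solves the Poisson
   equation Q = g - eta + T Q, where T is the one-step kernel of the
   state-action chain under (Phat, pi) and eta = E_dhat[g].  Averaging it
   against any probability vector mu gives E_mu[Q] - E_mu[T Q] = E_mu[g] - E_dhat[g],
   so for mu = d_{pi_b}^{P*} both suprema range over the same set of numbers.
   The analytic content is the convergence of the series defining Q:
   irreducibility and aperiodicity make some power T^N entrywise positive;
   this Doeblin minorisation shrinks the oscillation of the terms
   T^t (g - eta) geometrically, and stationarity of dhat keeps them centred at 0. *)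

Section ConvexCombinations.
Variable R : realFieldType.

Lemma ler_sum_term (X : finType) (f : X -> R) z :
  (forall y, 0 <= f y) -> f z <= \sum_y f y.
Proof.
move=> f_ge0; rewrite (bigD1 z) //= lerDl.
by apply: sumr_ge0 => y _; exact: f_ge0.
Qed.

Lemma wsum_bounds (X : finType) (Pr : pred X) (q f : X -> R) lo hi :
  (forall y, 0 <= q y) -> (forall y, lo <= f y <= hi) ->
  (\sum_(y | Pr y) q y) * lo <= \sum_(y | Pr y) q y * f y /\
  \sum_(y | Pr y) q y * f y <= (\sum_(y | Pr y) q y) * hi.
Proof.
move=> q_ge0 f_in; rewrite !mulr_suml; split; apply: ler_sum => y _;
  by apply: ler_wpM2l => //; case/andP: (f_in y).
Qed.

Lemma convex_comb_bounds (X : finType) (p f : X -> R) lo hi :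
  (forall y, 0 <= p y) -> \sum_y p y = 1 -> (forall y, lo <= f y <= hi) ->
  lo <= \sum_y p y * f y <= hi.
Proof.
move=> p_ge0 p_sum1 f_in; have [] := wsum_bounds predT p_ge0 f_in.
by rewrite p_sum1 !mul1r => -> ->.
Qed.

(* Doeblin's bound: a weight at least [eps] on [y0] pins an [eps]-share of the
   average to [f y0], so the width [hi - lo] shrinks by the factor [1 - eps]. *)
Lemma convex_comb_doeblin (X : finType) (p f : X -> R) (y0 : X) eps lo hi :
  (forall y, 0 <= p y) -> \sum_y p y = 1 -> eps <= p y0 ->
  (forall y, lo <= f y <= hi) ->
  eps * f y0 + (1 - eps) * lo <= \sum_y p y * f y /\
  \sum_y p y * f y <= eps * f y0 + (1 - eps) * hi.
Proof.
move=> p_ge0 p_sum1 eps_le f_in.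
have [rest_lo rest_hi] := wsum_bounds (fun y => y != y0) p_ge0 f_in.
move: p_sum1; rewrite (bigD1 y0) //= => p_sum1; rewrite (bigD1 y0) //=.
have /andP[lo_f hi_f] := f_in y0.
have : 0 <= (p y0 - eps) * (f y0 - lo) by apply: mulr_ge0; rewrite subr_ge0.
have : 0 <= (p y0 - eps) * (hi - f y0) by apply: mulr_ge0; rewrite subr_ge0.
set w := \sum_(y | y != y0) p y in rest_lo rest_hi p_sum1.
set s := \sum_(y | y != y0) p y * f y in rest_lo rest_hi *.
have w_eq : w = 1 - p y0 by rewrite -p_sum1 addrAC subrr add0r.
by rewrite w_eq in rest_lo rest_hi => h1 h2; split; nra.
Qed.

Lemma finite_pos_lower_bound (X : finType) (f : X -> R) :
  (forall x, 0 < f x) -> exists2 eps, 0 < eps & forall x, eps <= f x.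
Proof.
move=> f_gt0.
have inv_ge0 y : 0 <= (f y)^-1 by rewrite invr_ge0 ltW.
have sum_ge0 : 0 <= \sum_x (f x)^-1 by apply: sumr_ge0 => x _.
exists (1 + \sum_x (f x)^-1)^-1; first by rewrite invr_gt0; lra.
move=> x; rewrite -[leRHS](invrK (f x)) lef_pV2 ?posrE ?invr_gt0 //; last lra.
have := ler_sum_term x inv_ge0; lra.
Qed.

End ConvexCombinations.

Section StateActionChain.
Variables (R : realType) (S A : finType) (P : S -> A -> S -> R) (pi : S -> A -> R).
Hypotheses (HP : trans_kernel P) (Hpi : mdp_policy pi).
Local Notation T := (sa_trans P pi).
Local Notation Tn := (sa_nstep P pi).

Lemma sa_trans_ge0 x y : 0 <= T x y.
Proof. by apply: mulr_ge0; [apply: (proj1 HP) | apply: (proj1 Hpi)]. Qed.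

Lemma sa_trans_sum1 x : \sum_y T x y = 1.
Proof.
rewrite -(pair_big predT predT (fun s a => P x.1 x.2 s * pi s a)) /=.
rewrite -[RHS](proj2 HP x.1 x.2); apply: eq_bigr => s _.
by rewrite -mulr_sumr (proj2 Hpi s) mulr1.
Qed.

Lemma sa_nstep_ge0 n x y : 0 <= Tn n x y.
Proof.
elim: n y => [|n IH] y /=; first by case: (x == y).
by apply: sumr_ge0 => z _; apply: mulr_ge0 => //; exact: sa_trans_ge0.
Qed.

Lemma sa_nstep_sum1 n x : \sum_y Tn n x y = 1.
Proof.
elim: n => [|n IH] /=.
  by rewrite (bigD1 x) //= eqxx big1 ?addr0 // => y /negbTE; rewrite eq_sym => ->.
rewrite exchange_big /= -[RHS]IH; apply: eq_bigr => z _.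
by rewrite -mulr_sumr sa_trans_sum1 mulr1.
Qed.

Lemma sa_nstep_le1 n x y : Tn n x y <= 1.
Proof.
by rewrite -(sa_nstep_sum1 n x); apply: ler_sum_term => z; exact: sa_nstep_ge0.
Qed.

Lemma sa_nstepD m n x y : Tn (m + n) x y = \sum_z Tn m x z * Tn n z y.
Proof.
elim: n y => [|n IH] y /=.
  rewrite addn0 (bigD1 y) //= eqxx mulr1 big1 ?addr0 // => z /negbTE ->.
  by rewrite mulr0.
rewrite addnS /=; under eq_bigr => z _ do rewrite IH mulr_suml.
rewrite exchange_big /=; apply: eq_bigr => w _.
by rewrite mulr_sumr; apply: eq_bigr => z _; rewrite mulrA.
Qed.

Lemma sa_nstep1 x y : Tn 1 x y = T x y.
Proof.
rewrite /= (bigD1 x) //= eqxx mul1r big1 ?addr0 // => z /negbTE.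
by rewrite eq_sym => ->; rewrite mul0r.
Qed.

Lemma sa_nstepD_gt0 m n x w y :
  0 < Tn m x w -> 0 < Tn n w y -> 0 < Tn (m + n) x y.
Proof.
move=> xw_gt0 wy_gt0; rewrite sa_nstepD.
apply: lt_le_trans (ler_sum_term w _); first exact: mulr_gt0.
by move=> z; apply: mulr_ge0; exact: sa_nstep_ge0.
Qed.

Lemma sa_nstepM_gt0 x k n : 0 < Tn n x x -> 0 < Tn (k * n) x x.
Proof.
move=> xx_gt0; elim: k => [|k IH]; first by rewrite /= eqxx ltr01.
by rewrite mulSn; exact: sa_nstepD_gt0 IH.
Qed.

(* Euclid's algorithm on return times: a gap [g > 1] between two return times
   is reduced to [n mod g], where [n] is a return time that [g] does not divide. *)
Lemma consecutive_returns x : sa_aperiodic P pi ->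
  exists b, 0 < Tn b x x /\ 0 < Tn b.+1 x x.
Proof.
move=> aper.
pose gap g := exists a b, [/\ 0 < Tn a x x, 0 < Tn b x x & a = (b + g)%N].
suff gap1 g : (0 < g)%N -> gap g -> gap 1%N.
  have [n [n_gt0 xx_gt0]] : exists n, (0 < n)%N /\ 0 < Tn n x x.
    apply: contrapT => no_return; apply: (aper x 2%N isT) => n n_gt0 xx_gt0.
    by exfalso; apply: no_return; exists n.
  have [a [b [a_gt0 b_gt0 a_eq]]] : gap 1%N.
    by apply: (gap1 n n_gt0); exists n, 0%N; split; rewrite ?add0n //= eqxx ltr01.
  by exists b; rewrite -addn1 -a_eq.
elim/ltn_ind: g => g IH g_gt0 [a [b [a_gt0 b_gt0 ab]]].
have [g_eq1|g_neq1] := eqVneq g 1%N; first by exists a, b; rewrite -g_eq1.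
have [n [n_gt0 xx_gt0 g_ndvd]] :
    exists n, [/\ (0 < n)%N, 0 < Tn n x x & ~~ (g %| n)%N].
  apply: contrapT => all_dvd; apply: (aper x g) => [|n n_gt0 xx_gt0]; first lia.
  by apply: contrapT => /negP g_ndvd; apply: all_dvd; exists n.
have r_gt0 : (0 < n %% g)%N by rewrite lt0n.
apply: (IH (n %% g)%N) => //; first by rewrite ltn_mod; lia.
exists (n + n %/ g * b)%N, (n %/ g * a)%N; split.
- by apply: sa_nstepD_gt0 xx_gt0 _; exact: sa_nstepM_gt0.
- exact: sa_nstepM_gt0.
- by have := divn_eq n g; rewrite ab; lia.
Qed.

Lemma eventually_returns x : sa_aperiodic P pi ->
  exists K, forall n, (K <= n)%N -> 0 < Tn n x x.
Proof.
move=> /(consecutive_returns x) [b [b_gt0 b1_gt0]].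
exists (b * b)%N => m le_m; have [b_eq0|b_neq0] := eqVneq b 0%N.
  by rewrite -(muln1 m); apply: sa_nstepM_gt0; rewrite -b_eq0.
(* m = (q - r) b + r (b + 1) with q = m div b >= b > r = m mod b *)
have -> : m = ((m %/ b - m %% b) * b + m %% b * b.+1)%N.
  have : (b <= m %/ b)%N by rewrite leq_divRL ?lt0n.
  have : (m %% b < b)%N by rewrite ltn_mod lt0n.
  by have := divn_eq m b; nia.
by apply: sa_nstepD_gt0; exact: sa_nstepM_gt0.
Qed.

Lemma sa_nstep_primitive : sa_irreducible P pi -> sa_aperiodic P pi ->
  exists2 N, (0 < N)%N & forall x y, 0 < Tn N x y.
Proof.
move=> irr aper.
have [K HK] := choice (fun x => eventually_returns x aper).
have [m Hm] := choice (fun p : (S * A) * (S * A) => irr p.1 p.2).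
pose N := ((\max_x K x) + \max_(p : (S * A) * (S * A)) m p)%N.
exists N.+1 => // x y.
have : (K x <= \max_x K x)%N by exact: leq_bigmax.
have : (m (x, y) <= \max_(p : (S * A) * (S * A)) m p)%N by exact: leq_bigmax.
move=> le_m le_K; have -> : N.+1 = (N.+1 - m (x, y) + m (x, y))%N by lia.
by apply: sa_nstepD_gt0 (Hm (x, y)); apply: HK; lia.
Qed.

Lemma sum_sa_trans_pair (f : S * A -> R) x :
  \sum_(s' : S) P x.1 x.2 s' * \sum_(a' : A) pi s' a' * f (s', a') =
  \sum_y T x y * f y.
Proof.
rewrite [RHS](eq_bigr (fun y : S * A => T x (y.1, y.2) * f (y.1, y.2))); last by case.
rewrite -(pair_bigA _ (fun s a => T x (s, a) * f (s, a))) /=.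
apply: eq_bigr => s _; rewrite mulr_sumr; apply: eq_bigr => a _.
by rewrite /sa_trans /= mulrA.
Qed.

End StateActionChain.

Section PoissonEquation.
Variables (R : realType) (S A : finType) (P : S -> A -> S -> R) (pi : S -> A -> R).
Hypotheses (HP : trans_kernel P) (Hpi : mdp_policy pi).
Variables (d : S * A -> R) (g : S * A -> R).
Hypothesis Hd : sa_stationary P pi d.
Local Notation T := (sa_trans P pi).
Local Notation Tn := (sa_nstep P pi).
Local Notation eta := (avg_reward d g).
Local Notation Q := (Qfun P pi d g).

Definition Qfun_term t x := cond_exp_t P pi t g x - eta.

Lemma Qfun_termE t x : Qfun_term t x = \sum_y Tn t x y * (g y - eta).
Proof.
rewrite /Qfun_term /cond_exp_t; under [RHS]eq_bigr do rewrite mulrBr.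
by rewrite sumrB -mulr_suml sa_nstep_sum1 // mul1r.
Qed.

Lemma Qfun_term0 x : Qfun_term 0 x = g x - eta.
Proof.
rewrite Qfun_termE (bigD1 x) //= eqxx mul1r big1 ?addr0 // => y /negbTE.
by rewrite eq_sym => ->; rewrite mul0r.
Qed.

Lemma Qfun_termD m t x : Qfun_term (m + t) x = \sum_z Tn m x z * Qfun_term t z.
Proof.
rewrite Qfun_termE; under eq_bigr do rewrite sa_nstepD mulr_suml.
rewrite exchange_big /=; apply: eq_bigr => z _.
by rewrite Qfun_termE mulr_sumr; apply: eq_bigr => y _; rewrite mulrA.
Qed.

Lemma sa_stationary_nstep t y : \sum_x d x * Tn t x y = d y.
Proof.
elim: t y => [|t IH] y /=.
  rewrite (bigD1 y) //= eqxx mulr1 big1 ?addr0 // => x /negbTE ->.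
  by rewrite mulr0.
under eq_bigr do rewrite mulr_sumr.
rewrite exchange_big /= [RHS](proj2 (proj2 Hd)); apply: eq_bigr => z _.
by rewrite -(IH z) mulr_sumr; apply: eq_bigr => x _; rewrite /sa_trans; ring.
Qed.

Lemma expect_Qfun_term t : expect d (Qfun_term t) = 0.
Proof.
rewrite /expect; under eq_bigr do rewrite Qfun_termE mulr_sumr.
rewrite exchange_big /=.
have stat y : \sum_x d x * (Tn t x y * (g y - eta)) = d y * (g y - eta).
  rewrite -(sa_stationary_nstep t y) mulr_suml.
  by apply: eq_bigr => x _; rewrite mulrA.
under eq_bigr do rewrite stat mulrBr.
by rewrite sumrB -mulr_suml (proj1 (proj2 Hd)) mul1r subrr.
Qed.

Let B := \sum_y `|g y - eta|.

Lemma centred_reward_bounded y : - B <= g y - eta <= B.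
Proof.
by rewrite -ler_norml; apply: (@ler_sum_term R _ (fun y => `|g y - eta|) y).
Qed.

Section GeometricDecay.
Variables (N : nat) (x0 : S * A) (eps : R).
Hypotheses (N_gt0 : (0 < N)%N) (eps_gt0 : 0 < eps).
Hypothesis doeblin : forall x, eps <= Tn N x x0.

Lemma Qfun_term_oscillation j k : exists lo hi,
  hi - lo <= B *+ 2 * (1 - eps) ^+ k /\
  forall y, lo <= Qfun_term (k * N + j) y <= hi.
Proof.
elim: k => [|k [lo [hi [width bounds]]]].
  exists (- B), B; split; first by rewrite expr0 mulr1 opprK mulr2n.
  move=> y; rewrite mul0n add0n Qfun_termE.
  apply: convex_comb_bounds; last exact: centred_reward_bounded.
  - by move=> z; exact: sa_nstep_ge0.
  - exact: sa_nstep_sum1.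
pose mid := eps * Qfun_term (k * N + j) x0.
exists (mid + (1 - eps) * lo), (mid + (1 - eps) * hi); split.
  have eps_le1 : eps <= 1 := le_trans (doeblin x0) (sa_nstep_le1 HP Hpi _ _ _).
  have : (1 - eps) * (hi - lo) <= (1 - eps) * (B *+ 2 * (1 - eps) ^+ k).
    by apply: ler_wpM2l; rewrite ?subr_ge0.
  by rewrite exprS mulrCA; lra.
move=> y; rewrite mulSn -addnA Qfun_termD.
have [lo_le le_hi] := convex_comb_doeblin (sa_nstep_ge0 HP Hpi N y)
  (sa_nstep_sum1 HP Hpi N y) (doeblin y) bounds.
by rewrite lo_le le_hi.
Qed.

(* The stationary average of each term is 0, so 0 lies in every band [lo, hi]. *)
Lemma Qfun_term_geometric j k y :
  `|Qfun_term (k * N + j) y| <= B *+ 2 * (1 - eps) ^+ k.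
Proof.
have [lo [hi [width bounds]]] := Qfun_term_oscillation j k.
have /andP[lo_le0 le0_hi] := convex_comb_bounds (proj1 Hd) (proj1 (proj2 Hd)) bounds.
have := expect_Qfun_term (k * N + j); rewrite /expect => avg0.
rewrite avg0 in lo_le0 le0_hi.
have /andP[lo_le le_hi] := bounds y.
by rewrite ler_norml; apply/andP; split; lra.
Qed.

Lemma Qfun_term_block_sum k y :
  eps * \sum_(0 <= t < k * N) `|Qfun_term t y| <=
  N%:R * (B *+ 2) * (1 - (1 - eps) ^+ k).
Proof.
elim: k => [|k IH]; first by rewrite mul0n big_geq // expr0 subrr !mulr0.
rewrite mulSn addnC (@big_cat_nat _ _ _ (k * N)) //=; last lia.
have : \sum_(k * N <= t < k * N + N) `|Qfun_term t y| <=
    (B *+ 2 * (1 - eps) ^+ k) *+ N.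
  rewrite -[X in _ *+ X](addKn (k * N)) -sumr_const_nat.
  apply: ler_sum_nat => t /andP[le_t lt_t].
  by rewrite (_ : t = k * N + (t - k * N))%N ?Qfun_term_geometric //; lia.
rewrite exprS -mulr_natl => /(ler_wpM2l (ltW eps_gt0)); rewrite mulrDr; nra.
Qed.

Lemma is_cvg_series_Qfun_term_geometric y :
  cvgn (series (fun t : nat => (Qfun_term t y : R^o))).
Proof.
apply: normed_cvg; apply: nondecreasing_is_cvgn.
  apply: (@nondecreasing_series R (fun t => `|(Qfun_term t y : R^o)|) predT 0).
  by move=> n _ _; exact: normr_ge0.
exists (N%:R * (B *+ 2) / eps) => _ [n _ <-] /=.
rewrite /series /= ler_pdivlMr // mulrC.
apply: (@le_trans _ _ (eps * \sum_(0 <= t < n * N) `|Qfun_term t y|)).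
  apply: ler_wpM2l; first exact: ltW.
  rewrite (@big_cat_nat _ _ _ n 0 (n * N)) //=; last by rewrite leq_pmulr.
  by rewrite lerDl; apply: sumr_ge0 => t _; exact: normr_ge0.
apply: le_trans (Qfun_term_block_sum n y) _.
rewrite -[leRHS]mulr1; apply: ler_wpM2l.
  by rewrite mulr_ge0 ?mulrn_wge0 //; apply: sumr_ge0.
by rewrite gerBl exprn_ge0 // subr_ge0 (le_trans (doeblin x0)) ?sa_nstep_le1.
Qed.

End GeometricDecay.

Hypotheses (irr : sa_irreducible P pi) (aper : sa_aperiodic P pi).

Lemma is_cvg_series_Qfun_term y :
  cvgn (series (fun t : nat => (Qfun_term t y : R^o))).
Proof.
have [N N_gt0 primitive] := sa_nstep_primitive HP Hpi irr aper.
have [eps eps_gt0 doeblin] := finite_pos_lower_bound (primitive ^~ y).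
exact: (@is_cvg_series_Qfun_term_geometric _ _ _ N_gt0 eps_gt0 doeblin y).
Qed.

(* Poisson equation: shifting the series by one step is one application of T. *)
Lemma Qfun_poisson x : Q x = g x - eta + \sum_y T x y * Q y.
Proof.
pose Qn z := series (fun t : nat => (Qfun_term t z : R^o)).
have QnS n : Qn x n.+1 = g x - eta + \sum_y T x y * Qn y n.
  rewrite /Qn /series /= big_nat_recl // Qfun_term0; congr (_ + _).
  under eq_bigr do rewrite -add1n Qfun_termD.
  rewrite exchange_big /=; apply: eq_bigr => y _; rewrite mulr_sumr.
  by apply: eq_bigr => t _; congr (_ * _); exact: sa_nstep1.
have : Qn x n.+1 @[n --> \oo] --> (g x - eta + \sum_y T x y * Q y : R^o).
  rewrite (funext QnS); apply: cvgD; first exact: cvg_cst.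
  apply: cvg_big => [|y _]; first exact: add_continuous.
  by apply: cvgMr; exact: is_cvg_series_Qfun_term.
by rewrite (cvg_shiftS (Qn x)); exact: cvg_lim.
Qed.

Lemma expect_Qfun_sub_next (mu : S * A -> R) : \sum_x mu x = 1 ->
  expect mu Q - \sum_x mu x *
    \sum_(s' : S) P x.1 x.2 s' * \sum_(a' : A) pi s' a' * Q (s', a') =
  expect mu g - expect d g.
Proof.
move=> mu_sum1; under eq_bigr do rewrite sum_sa_trans_pair.
rewrite /expect -sumrB.
under eq_bigr => x _ do rewrite -mulrBr Qfun_poisson addrK mulrBr.
by rewrite sumrB -mulr_suml mu_sum1 mul1r.
Qed.

End PoissonEquation.

Theorem theorem3p1 (R : realType) (S A : finType)
  (Pstar Phat : S -> A -> S -> R) (pib pi : S -> A -> R)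
  (dbstar dhat : S * A -> R) (G : set (S * A -> R)) :
  trans_kernel Pstar -> trans_kernel Phat -> mdp_policy pib -> mdp_policy pi ->
  sa_irreducible Pstar pib -> sa_aperiodic Pstar pib ->
  sa_irreducible Pstar pi -> sa_aperiodic Pstar pi ->
  sa_irreducible Phat pib -> sa_aperiodic Phat pib ->
  sa_irreducible Phat pi -> sa_aperiodic Phat pi ->
  sa_stationary Pstar pib dbstar -> sa_stationary Phat pi dhat ->
  (exists M : R, forall g, G g -> forall x, `|g x| <= M) ->
  IPM G dbstar dhat =
  RF [set f | exists2 g, G g & f = Qfun Phat pi dhat g] dbstar pi Phat.
Proof.
move=> _ HP _ Hpi _ _ _ _ _ _ irr aper [_ [db_sum1 _]] Hd _.
have residual g := expect_Qfun_sub_next HP Hpi g Hd irr aper db_sum1.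
rewrite /IPM /RF; congr sup; apply/seteqP; split => r /=.
  move=> [g Gg ->]; exists (Qfun Phat pi dhat g); first by exists g.
  by rewrite residual.
by move=> [_ [g Gg ->] ->]; exists g; rewrite ?residual.
Qed.
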